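(* Let $2\le m<n$, let $g_1,\dots,g_m:\mathbb{R}^n\to\mathbb{R}$ be smooth maps and $c_1,\dots,c_m\in\mathbb{R}$; let $Y=\{p: g_i(p)=c_i,\ 1\le i\le m-1\}$ and $X=\{p\in Y: g_m(p)=c_m\}$. Assume $Y$ is nonempty, bounded and connected, $\nabla g_1(p),\dots,\nabla g_{m-1}(p)$ are linearly independent at every $p\in Y$, and $g_m|_Y$ is a Morse function on $Y$. If $c_m$ equals the global maximum or the global minimum of $g_m|_Y$, then the social choice problem over $X$ has a solution.
   Context: A smooth function on a manifold is a Morse function if its Hessian (in local coordinates) is nonsingular at each of its critical points. For $X\subseteq\mathbb{R}^n$ and $k\ge 2$, a social choice function for $k$ agents over $X$ is a continuous map $F:X^k\to X$ which is anonymous (invariant under permutations of the arguments) and unanimous ($F(p,\dots,p)=p$). ''The social choice problem over $X$ has a solution'' means that an SCF for $k$ agents over $X$ exists for every $k\ge 2$. *)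

(* classical reals. Points of R^n are functions nat -> R whose
   coordinates of index >= n vanish. *)
From Stdlib Require Import Reals Lra Lia Arith.
Open Scope R_scope.

Definition pt := nat -> R.

Definition InRn (n : nat) (x : pt) : Prop := forall i, (n <= i)%nat -> x i = 0.

Fixpoint sumR (n : nat) (f : nat -> R) : R :=
  match n with O => 0 | S k => sumR k f + f k end.

Definition distRn (n : nat) (x y : pt) : R := sqrt (sumR n (fun i => (x i - y i) ^ 2)).
Definition normR (n : nat) (x : pt) : R := sqrt (sumR n (fun i => (x i) ^ 2)).

Definition shift (x : pt) (i : nat) (t : R) : pt :=
  fun k => if Nat.eqb k i then x k + t else x k.

Definition IsPartialAt (f : pt -> R) (x : pt) (i : nat) (a : R) : Prop :=
  derivable_pt_lim (fun t => f (shift x i t)) 0 a.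

Definition IsGradAt (n : nat) (f : pt -> R) (x v : pt) : Prop :=
  forall i, (i < n)%nat -> IsPartialAt f x i (v i).

Definition open_in (n : nat) (D : pt -> Prop) : Prop :=
  forall x, D x -> InRn n x /\
    exists r, r > 0 /\ forall y, InRn n y -> distRn n x y < r -> D y.

Definition cont_on (n : nat) (D : pt -> Prop) (f : pt -> R) : Prop :=
  forall x, D x -> forall eps, eps > 0 -> exists delta, delta > 0 /\
    forall y, D y -> distRn n x y < delta -> Rabs (f y - f x) < eps.

Fixpoint Ck (n : nat) (D : pt -> Prop) (k : nat) (f : pt -> R) : Prop :=
  match k with
  | O => cont_on n D f
  | S k' => cont_on n D f /\
      forall i, (i < n)%nat -> exists g : pt -> R,
        (forall x, D x -> IsPartialAt f x i (g x)) /\ Ck n D k' g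
  end.

Definition smooth_on (n : nat) (D : pt -> Prop) (f : pt -> R) : Prop :=
  forall k, Ck n D k f.

Definition rel_open (n : nat) (S U : pt -> Prop) : Prop :=
  (forall p, U p -> S p) /\
  forall p, U p -> exists r, r > 0 /\ forall q, S q -> distRn n p q < r -> U q.

Definition connected_set (n : nat) (S : pt -> Prop) : Prop :=
  forall U V, rel_open n S U -> rel_open n S V ->
    (forall p, S p -> U p \/ V p) -> (forall p, U p -> V p -> False) ->
    (forall p, ~ U p) \/ (forall p, ~ V p).

Definition bounded_set (n : nat) (S : pt -> Prop) : Prop :=
  exists M, forall p, S p -> normR n p <= M.

(* phi : U (open in R^d) -> S (subset of R^n) is a local parametrization
   (inverse of a chart / local coordinates) of S: smooth, injective, an immersion,
   a homeomorphism onto a relatively open subset of S. *)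
Definition is_chart (n d : nat) (S : pt -> Prop) (U : pt -> Prop) (phi : pt -> pt) : Prop :=
  open_in d U /\
  (forall j, (j < n)%nat -> smooth_on d U (fun u => phi u j)) /\
  (forall u, U u -> S (phi u)) /\
  (forall u v, U u -> U v -> phi u = phi v -> u = v) /\
  rel_open n S (fun q => exists u, U u /\ phi u = q) /\
  (forall u, U u -> forall eps, eps > 0 -> exists delta, delta > 0 /\
     forall v, U v -> distRn n (phi u) (phi v) < delta -> distRn d u v < eps) /\
  (forall u, U u -> forall J : nat -> nat -> R,
     (forall j i, (j < n)%nat -> (i < d)%nat ->
        IsPartialAt (fun w => phi w j) u i (J j i)) ->
     forall w, InRn d w ->
       (forall j, (j < n)%nat -> sumR d (fun i => J j i * w i) = 0) ->
       forall i, (i < d)%nat -> w i = 0).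

Definition critical_pt (d : nat) (h : pt -> R) (u0 : pt) : Prop :=
  forall i, (i < d)%nat -> IsPartialAt h u0 i 0.

Definition IsHessAt (d : nat) (U : pt -> Prop) (h : pt -> R) (u0 : pt)
    (H : nat -> nat -> R) : Prop :=
  exists G : nat -> pt -> R,
    (forall i u, (i < d)%nat -> U u -> IsPartialAt h u i (G i u)) /\
    (forall i j, (i < d)%nat -> (j < d)%nat -> IsPartialAt (G i) u0 j (H i j)).

Definition nonsingular_mx (d : nat) (H : nat -> nat -> R) : Prop :=
  forall w, InRn d w ->
    (forall i, (i < d)%nat -> sumR d (fun j => H i j * w j) = 0) ->
    forall i, (i < d)%nat -> w i = 0.

Definition Morse_on (n d : nat) (S : pt -> Prop) (f : pt -> R) : Prop :=
  forall p, S p ->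
    (exists U phi u0, is_chart n d S U phi /\ U u0 /\ phi u0 = p) /\
    (forall U phi u0, is_chart n d S U phi -> U u0 -> phi u0 = p ->
       critical_pt d (fun u => f (phi u)) u0 ->
       forall H, IsHessAt d U (fun u => f (phi u)) u0 H -> nonsingular_mx d H).

(* g_1..g_m are g 0 .. g (m-1); c_1..c_m are c 0 .. c (m-1) *)
Definition Yset (n m : nat) (g : nat -> pt -> R) (c : nat -> R) (p : pt) : Prop :=
  InRn n p /\ forall i, (i < m - 1)%nat -> g i p = c i.

Definition Xset (n m : nat) (g : nat -> pt -> R) (c : nat -> R) (p : pt) : Prop :=
  Yset n m g c p /\ g (m - 1)%nat p = c (m - 1)%nat.

Definition grads_indep (n m : nat) (g : nat -> pt -> R) (p : pt) : Prop :=
  forall v : nat -> pt, (forall i, (i < m - 1)%nat -> IsGradAt n (g i) p (v i)) ->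
  forall a : nat -> R,
    (forall j, (j < n)%nat -> sumR (m - 1) (fun i => a i * v i j) = 0) ->
    forall i, (i < m - 1)%nat -> a i = 0.

Definition is_global_max (S : pt -> Prop) (f : pt -> R) (c : R) : Prop :=
  (exists p, S p /\ f p = c) /\ forall q, S q -> f q <= c.

Definition is_global_min (S : pt -> Prop) (f : pt -> R) (c : R) : Prop :=
  (exists p, S p /\ f p = c) /\ forall q, S q -> c <= f q.

Definition in_power (X : pt -> Prop) (k : nat) (xs : nat -> pt) : Prop :=
  forall i, (i < k)%nat -> X (xs i).

Definition is_perm (k : nat) (sigma : nat -> nat) : Prop :=
  (forall i, (i < k)%nat -> (sigma i < k)%nat) /\
  (forall i j, (i < k)%nat -> (j < k)%nat -> sigma i = sigma j -> i = j).

Definition is_SCF (n : nat) (X : pt -> Prop) (k : nat) (F : (nat -> pt) -> pt) : Prop :=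
  (forall xs ys, (forall i, (i < k)%nat -> xs i = ys i) -> F xs = F ys) /\
  (forall xs, in_power X k xs -> X (F xs)) /\
  (forall xs, in_power X k xs -> forall eps, eps > 0 -> exists delta, delta > 0 /\
     forall ys, in_power X k ys -> (forall i, (i < k)%nat -> distRn n (xs i) (ys i) < delta) ->
       distRn n (F xs) (F ys) < eps) /\
  (forall xs sigma, in_power X k xs -> is_perm k sigma ->
     F (fun i => xs (sigma i)) = F xs) /\
  (forall p, X p -> F (fun _ => p) = p).

Definition social_choice_solvable (n : nat) (X : pt -> Prop) : Prop :=
  forall k, (2 <= k)%nat -> exists F, is_SCF n X k F.

(** At the extremal level [c] of [g_m] on [Y], every point of [X] is a local
    extremum, hence a critical point, of [g_m|Y].  Since [g_m|Y] is Morse, in a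
    chart the gradient of [g_m|Y] vanishes there and its Jacobian (the Hessian)
    is nonsingular; a first-order estimate then shows that the gradient has no
    other zero nearby.  So [X] is a discrete set, and on a discrete set the map
    sending a unanimous profile to its common value and every other profile to a
    fixed point of [X] is continuous (profiles near a unanimous one are equal to
    it), anonymous and unanimous. *)

From Stdlib Require Import Reals Lra Lia Arith FunctionalExtensionality.
From Stdlib Require Import ClassicalEpsilon FinFun.
From mathcomp Require all_boot all_algebra Rstruct.
Set Bullet Behavior "Strict Subproofs".
Open Scope R_scope.

Lemma sumR_ext N f g : (forall k, (k < N)%nat -> f k = g k) -> sumR N f = sumR N g.
Proof.
induction N as [|N IH]; intros H; cbn [sumR]; [reflexivity|].
rewrite IH by (intros; apply H; lia). rewrite H by lia. reflexivity.
Qed.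

Lemma sumR_0 N : sumR N (fun _ => 0) = 0.
Proof. induction N as [|N IH]; cbn [sumR]; [|rewrite IH]; lra. Qed.

Lemma sumR_scal N c f : sumR N (fun k => c * f k) = c * sumR N f.
Proof. induction N as [|N IH]; cbn [sumR]; [|rewrite IH]; lra. Qed.

Lemma sumR_minus N f g : sumR N (fun k => f k - g k) = sumR N f - sumR N g.
Proof. induction N as [|N IH]; cbn [sumR]; [|rewrite IH]; lra. Qed.

Lemma sumR_le N f g : (forall k, (k < N)%nat -> f k <= g k) -> sumR N f <= sumR N g.
Proof.
induction N as [|N IH]; intros H; cbn [sumR]; [lra|].
assert (f N <= g N) by (apply H; lia).
assert (sumR N f <= sumR N g) by (apply IH; intros; apply H; lia). lra.
Qed.

Lemma sumR_nonneg N f : (forall k, (k < N)%nat -> 0 <= f k) -> 0 <= sumR N f.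
Proof. intros H. rewrite <- (sumR_0 N). now apply sumR_le. Qed.

Lemma sumR_le_const N f e : (forall k, (k < N)%nat -> f k <= e) -> sumR N f <= INR N * e.
Proof.
induction N as [|N IH]; intros H; cbn [sumR]; [simpl; lra|].
assert (f N <= e) by (apply H; lia).
assert (sumR N f <= INR N * e) by (apply IH; intros; apply H; lia).
rewrite S_INR. lra.
Qed.

Lemma sumR_abs N f : Rabs (sumR N f) <= sumR N (fun k => Rabs (f k)).
Proof.
induction N as [|N IH]; cbn [sumR]; [rewrite Rabs_R0; lra|].
eapply Rle_trans; [apply Rabs_triang|]. lra.
Qed.

Lemma sumR_term_le N f k :
  (forall k, (k < N)%nat -> 0 <= f k) -> (k < N)%nat -> f k <= sumR N f.
Proof.
induction N as [|N IH]; intros H Hk; cbn [sumR]; [lia|].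
assert (0 <= sumR N f) by (apply sumR_nonneg; intros; apply H; lia).
destruct (Nat.eq_dec k N) as [->|Hne]; [lra|].
assert (f k <= sumR N f) by (apply IH; [intros; apply H|]; lia).
assert (0 <= f N) by (apply H; lia). lra.
Qed.

Lemma distRn_refl N x : distRn N x x = 0.
Proof.
unfold distRn. rewrite (sumR_ext _ _ (fun _ => 0)), sumR_0; [apply sqrt_0|].
intros; simpl; ring.
Qed.

Lemma distRn_le_sum_abs N x y : distRn N x y <= sumR N (fun k => Rabs (x k - y k)).
Proof.
unfold distRn. induction N as [|N IH]; cbn [sumR]; [rewrite sqrt_0; lra|].
set (S := sumR N (fun k => (x k - y k) ^ 2)) in *.
set (T := sumR N (fun k => Rabs (x k - y k))) in *.
set (a := x N - y N).
assert (HS : 0 <= S) by (apply sumR_nonneg; intros; apply pow2_ge_0).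
assert (HT : 0 <= T) by (apply sumR_nonneg; intros; apply Rabs_pos).
assert (Ha : 0 <= Rabs a) by apply Rabs_pos.
assert (HST : S <= T ^ 2).
{ pose proof (sqrt_sqrt S HS). pose proof (sqrt_pos S). nra. }
rewrite <- (sqrt_pow2 (T + Rabs a)) by lra. apply sqrt_le_1_alt.
rewrite <- (pow2_abs a). nra.
Qed.

Lemma distRn_le_coordwise N x y z :
  (forall k, (k < N)%nat -> Rabs (z k - x k) <= Rabs (y k - x k)) ->
  distRn N x z <= distRn N x y.
Proof.
intros H. apply sqrt_le_1_alt, sumR_le. intros k Hk.
rewrite <- (pow2_abs (x k - z k)), <- (pow2_abs (x k - y k)).
rewrite Rabs_minus_sym, (Rabs_minus_sym (x k)).
pose proof (H k Hk). pose proof (Rabs_pos (z k - x k)). nra.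
Qed.

Lemma eq_of_sumR_abs_le0 N x y : InRn N x -> InRn N y ->
  sumR N (fun k => Rabs (x k - y k)) <= 0 -> x = y.
Proof.
intros Hx Hy Hs. apply functional_extensionality. intros l.
destruct (lt_dec l N) as [Hl|Hl]; [|rewrite Hx, Hy by lia; reflexivity].
assert (Rabs (x l - y l) <= 0).
{ eapply Rle_trans; [|exact Hs].
  apply (sumR_term_le N (fun k => Rabs (x k - y k))); auto. intros; apply Rabs_pos. }
destruct (Req_dec (x l - y l) 0) as [E|E]; [lra|].
apply Rabs_pos_lt in E. lra.
Qed.

Lemma shift_0 x i : shift x i 0 = x.
Proof. apply functional_extensionality; intro k; unfold shift. destruct (Nat.eqb k i); lra. Qed.

Lemma shift_shift x i c t : shift (shift x i c) i t = shift x i (c + t).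
Proof. apply functional_extensionality; intro k; unfold shift. destruct (Nat.eqb k i); lra. Qed.

Lemma InRn_shift N x i t : InRn N x -> (i < N)%nat -> InRn N (shift x i t).
Proof. intros H Hi k Hk. unfold shift. destruct (Nat.eqb_spec k i); [lia|auto]. Qed.

Lemma distRn_shift N x i t : (i < N)%nat -> distRn N x (shift x i t) = Rabs t.
Proof.
intros Hi. unfold distRn.
assert (Hsum : forall M, sumR M (fun k => (x k - shift x i t k) ^ 2) =
                         if Nat.ltb i M then t ^ 2 else 0).
{ induction M as [|M IH]; cbn [sumR]; [reflexivity|]. rewrite IH. unfold shift.
  destruct (Nat.ltb_spec i M), (Nat.eqb_spec M i), (Nat.ltb_spec i (S M));
    try lia; subst; ring. }
rewrite Hsum. destruct (Nat.ltb_spec i N); [|lia].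
rewrite <- Rsqr_pow2. apply sqrt_Rsqr_abs.
Qed.

Lemma open_in_shift d U u i : open_in d U -> U u -> (i < d)%nat ->
  exists r, r > 0 /\ forall t, Rabs t < r -> U (shift u i t).
Proof.
intros HU Uu Hi. destruct (HU u Uu) as [Hud [r [Hr Hb]]].
exists r. split; auto. intros t Ht.
apply Hb; [apply InRn_shift; auto|]. now rewrite distRn_shift.
Qed.

Lemma derivable_pt_lim_sumR N (F : nat -> R -> R) x L :
  (forall k, (k < N)%nat -> derivable_pt_lim (F k) x (L k)) ->
  derivable_pt_lim (fun t => sumR N (fun k => F k t)) x (sumR N L).
Proof.
induction N as [|N IH]; intros H; cbn [sumR].
- apply derivable_pt_lim_const.
- apply derivable_pt_lim_plus; [apply IH; intros; apply H|apply H]; lia.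
Qed.

Lemma partial_along_line f z j c L : IsPartialAt f (shift z j c) j L ->
  derivable_pt_lim (fun s => f (shift z j s)) c L.
Proof.
intros H eps Heps. destruct (H eps Heps) as [del Hd]. exists del. intros h Hh Hlt.
specialize (Hd h Hh Hlt). rewrite !shift_shift, Rplus_0_l, Rplus_0_r in Hd. exact Hd.
Qed.

Lemma partial_eq0_at_extremum d U h u i a : open_in d U -> U u -> (i < d)%nat ->
  ((forall v, U v -> h v <= h u) \/ (forall v, U v -> h u <= h v)) ->
  IsPartialAt h u i a -> a = 0.
Proof.
intros HU Uu Hi Hext Ha. destruct (open_in_shift d U u i HU Uu Hi) as [r [Hr Hline]].
assert (Hloc : forall t, -r < t -> t < r -> U (shift u i t))
  by (intros t H1 H2; apply Hline; apply Rabs_def1; lra).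
rewrite <- (derive_pt_eq_0 _ 0 a (exist _ a Ha) Ha).
destruct Hext as [Hmax|Hmin].
- apply (deriv_maximum _ (-r) r); try lra.
  intros t H1 H2. rewrite shift_0. apply Hmax, Hloc; auto.
- apply (deriv_minimum _ (-r) r); try lra.
  intros t H1 H2. rewrite shift_0. apply Hmin, Hloc; auto.
Qed.

(* Mean value theorem for [s |-> f (shift z j s) - a * s] on the segment from [0] to [b]. *)
Lemma line_increment_bound f z j b a eps (D : R -> R) :
  (forall s, Rmin 0 b <= s <= Rmax 0 b ->
     IsPartialAt f (shift z j s) j (D s) /\ Rabs (D s - a) <= eps) ->
  Rabs (f (shift z j b) - f z - a * b) <= eps * Rabs b.
Proof.
intros H.
destruct (MVT_abs (fun s => f (shift z j s) - a * s) (fun s => D s - a) 0 b)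
  as [c [Heq Hc]].
{ intros c Hc. apply derivable_pt_lim_minus.
  - apply partial_along_line, H, Hc.
  - replace a with (a * 1) at 2 by ring.
    apply derivable_pt_lim_scal, derivable_pt_lim_id. }
rewrite shift_0, Rmult_0_r, !Rminus_0_r in Heq.
replace (f (shift z j b) - f z - a * b) with (f (shift z j b) - a * b - f z) by ring.
rewrite Heq. apply Rmult_le_compat_r; [apply Rabs_pos|apply H, Hc].
Qed.

Lemma common_delta {A : Type} N (mu : nat -> A -> R) (Q : nat -> A -> Prop) :
  (forall k, (k < N)%nat -> exists d, d > 0 /\ forall a, mu k a < d -> Q k a) ->
  exists d, d > 0 /\ forall k, (k < N)%nat -> forall a, mu k a < d -> Q k a.
Proof.
induction N as [|N IH]; intros H.
- exists 1. split; [lra|]. intros; lia.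
- destruct IH as [d1 [Hd1 H1]]; [intros; apply H; lia|].
  destruct (H N ltac:(lia)) as [d2 [Hd2 H2]].
  exists (Rmin d1 d2). split; [apply Rmin_pos; auto|].
  intros k Hk a Ha. pose proof (Rmin_l d1 d2). pose proof (Rmin_r d1 d2).
  destruct (Nat.eq_dec k N) as [->|Hne]; [apply H2; lra|apply H1; lia || lra].
Qed.

Lemma finite_choice {B : Type} N (b0 : B) (P : nat -> B -> Prop) :
  (forall k, (k < N)%nat -> exists y, P k y) ->
  exists f : nat -> B, forall k, (k < N)%nat -> P k (f k).
Proof.
intros H.
assert (H' : forall k, exists y, (k < N)%nat -> P k y).
{ intros k. destruct (lt_dec k N) as [Hk|Hk].
  - destruct (H k Hk) as [y Hy]. now exists y.
  - exists b0. intros; lia. }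
exists (fun k => proj1_sig (constructive_indefinite_description _ (H' k))).
intros k Hk. destruct (constructive_indefinite_description _ (H' k)) as [y Hy]. auto.
Qed.

Definition cont_within (N : nat) (D : pt -> Prop) (F : pt -> R) (x : pt) : Prop :=
  forall eps, eps > 0 -> exists delta, delta > 0 /\
    forall y, D y -> distRn N x y < delta -> Rabs (F y - F x) < eps.

Lemma cont_within_const N D a x : cont_within N D (fun _ => a) x.
Proof.
intros eps He. exists 1. split; [lra|]. intros. rewrite Rminus_diag, Rabs_R0. lra.
Qed.

Lemma cont_within_plus N D F G x :
  cont_within N D F x -> cont_within N D G x -> cont_within N D (fun y => F y + G y) x.
Proof.
intros HF HG eps He.
destruct (HF (eps / 2) ltac:(lra)) as [d1 [Hd1 H1]].
destruct (HG (eps / 2) ltac:(lra)) as [d2 [Hd2 H2]].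
exists (Rmin d1 d2). split; [apply Rmin_pos; auto|]. intros y Dy Hy.
pose proof (Rmin_l d1 d2). pose proof (Rmin_r d1 d2).
specialize (H1 y Dy ltac:(lra)). specialize (H2 y Dy ltac:(lra)).
replace (F y + G y - (F x + G x)) with ((F y - F x) + (G y - G x)) by ring.
eapply Rle_lt_trans; [apply Rabs_triang|]. lra.
Qed.

Lemma cont_within_mult N D F G x :
  cont_within N D F x -> cont_within N D G x -> cont_within N D (fun y => F y * G y) x.
Proof.
intros HF HG eps He.
set (a := Rabs (F x)). set (b := Rabs (G x)).
assert (Ha : 0 <= a) by apply Rabs_pos. assert (Hb : 0 <= b) by apply Rabs_pos.
set (e1 := eps / (3 * (b + 1))). set (e2 := Rmin 1 (eps / (3 * (a + 1)))).
assert (He1 : e1 > 0) by (apply Rdiv_lt_0_compat; lra).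
assert (He2 : e2 > 0) by (apply Rmin_pos; [|apply Rdiv_lt_0_compat]; lra).
destruct (HF e1 He1) as [d1 [Hd1 H1]]. destruct (HG e2 He2) as [d2 [Hd2 H2]].
exists (Rmin d1 d2). split; [apply Rmin_pos; auto|]. intros y Dy Hy.
pose proof (Rmin_l d1 d2). pose proof (Rmin_r d1 d2).
specialize (H1 y Dy ltac:(lra)). specialize (H2 y Dy ltac:(lra)).
assert (e2 <= 1) by apply Rmin_l. assert (e2 <= eps / (3 * (a + 1))) by apply Rmin_r.
assert (HGy : Rabs (G y) <= b + 1).
{ replace (G y) with (G x + (G y - G x)) by ring.
  eapply Rle_trans; [apply Rabs_triang|]. unfold b. lra. }
replace (F y * G y - F x * G x) with ((F y - F x) * G y + F x * (G y - G x)) by ring.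
eapply Rle_lt_trans; [apply Rabs_triang|]. rewrite !Rabs_mult.
assert (E1 : Rabs (F y - F x) * Rabs (G y) <= e1 * (b + 1))
  by (apply Rmult_le_compat; try apply Rabs_pos; lra).
assert (E2 : a * Rabs (G y - G x) <= (a + 1) * (eps / (3 * (a + 1))))
  by (apply Rmult_le_compat; try apply Rabs_pos; lra).
assert (e1 * (b + 1) = eps / 3) by (unfold e1; field; lra).
assert ((a + 1) * (eps / (3 * (a + 1))) = eps / 3) by (field; lra).
fold a. lra.
Qed.

Lemma cont_within_sumR N M D (F : nat -> pt -> R) x :
  (forall k, (k < M)%nat -> cont_within N D (F k) x) ->
  cont_within N D (fun y => sumR M (fun k => F k y)) x.
Proof.
induction M as [|M IH]; intros H; cbn [sumR].
- apply cont_within_const.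
- apply cont_within_plus; [apply IH; intros; apply H|apply H]; lia.
Qed.

Lemma distRn_cont_within d n (U : pt -> Prop) (phi : pt -> pt) u0 :
  (forall k, (k < n)%nat -> cont_within d U (fun u => phi u k) u0) ->
  forall e, e > 0 -> exists delta, delta > 0 /\
    forall y, U y -> distRn d u0 y < delta -> distRn n (phi u0) (phi y) < e.
Proof.
intros H e He.
assert (Hn : 0 <= INR n) by apply pos_INR.
set (e' := e / (INR n + 1)).
assert (He' : e' > 0) by (apply Rdiv_lt_0_compat; lra).
destruct (common_delta n (fun _ y => distRn d u0 y)
            (fun k y => U y -> Rabs (phi y k - phi u0 k) < e')) as [del [Hdel Hall]].
{ intros k Hk. destruct (H k Hk e' He') as [d1 [Hd1 H1]]. exists d1. auto. }
exists del. split; auto. intros y Uy Hy.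
eapply Rle_lt_trans; [apply distRn_le_sum_abs|].
eapply Rle_lt_trans.
- apply sumR_le_const. intros k Hk. rewrite Rabs_minus_sym. left. apply Hall; auto.
- unfold e'. apply Rmult_lt_reg_r with (INR n + 1); [lra|].
  replace (INR n * (e / (INR n + 1)) * (INR n + 1)) with (INR n * e) by (field; lra).
  nra.
Qed.

Lemma cont_within_comp d n (U : pt -> Prop) (phi : pt -> pt) F u0 :
  (forall y, U y -> InRn n (phi y)) ->
  (forall k, (k < n)%nat -> cont_within d U (fun u => phi u k) u0) ->
  cont_within n (InRn n) F (phi u0) -> cont_within d U (fun u => F (phi u)) u0.
Proof.
intros Hin Hphi HF eps He. destruct (HF eps He) as [d1 [Hd1 H1]].
destruct (distRn_cont_within d n U phi u0 Hphi d1 Hd1) as [d2 [Hd2 H2]].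
exists d2. split; auto.
Qed.

Definition stair (x y : pt) (j : nat) : pt := fun l => if Nat.ltb l j then y l else x l.

Lemma stair_0 x y : stair x y 0 = x.
Proof.
apply functional_extensionality; intro l; unfold stair.
destruct (Nat.ltb_spec l 0); [lia|auto].
Qed.

Lemma stair_full N x y : InRn N x -> InRn N y -> stair x y N = y.
Proof.
intros Hx Hy. apply functional_extensionality; intro l; unfold stair.
destruct (Nat.ltb_spec l N); auto. rewrite Hx, Hy; auto.
Qed.

Lemma stair_S x y j : stair x y (S j) = shift (stair x y j) j (y j - x j).
Proof.
apply functional_extensionality; intro l; unfold stair, shift.
destruct (Nat.eqb_spec l j) as [->|Hne].
- destruct (Nat.ltb_spec j (S j)), (Nat.ltb_spec j j); try lia. ring.
- destruct (Nat.ltb_spec l (S j)), (Nat.ltb_spec l j); try lia; auto.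
Qed.

Lemma InRn_stair N x y j : InRn N x -> InRn N y -> InRn N (stair x y j).
Proof. intros Hx Hy l Hl. unfold stair. destruct (Nat.ltb l j); auto. Qed.

Lemma stair_between x y j l : Rabs (stair x y j l - x l) <= Rabs (y l - x l).
Proof.
unfold stair. destruct (Nat.ltb l j); [lra|].
rewrite Rminus_diag, Rabs_R0. apply Rabs_pos.
Qed.

(* The increment from [x] to [y] is taken along the stair, one coordinate at a
   time, each step being controlled by [line_increment_bound]. *)
Lemma taylor1_bound_box N (D : pt -> Prop) f (Df : nat -> pt -> R) x y eps :
  InRn N x -> InRn N y ->
  (forall p k, D p -> (k < N)%nat -> IsPartialAt f p k (Df k p)) ->
  (forall p, InRn N p ->
     (forall l, (l < N)%nat -> Rabs (p l - x l) <= Rabs (y l - x l)) ->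
     D p /\ forall k, (k < N)%nat -> Rabs (Df k p - Df k x) <= eps) ->
  Rabs (f y - f x - sumR N (fun k => Df k x * (y k - x k)))
    <= eps * sumR N (fun k => Rabs (y k - x k)).
Proof.
intros Hx Hy Hp Hbox.
assert (Hstair : forall j, (j <= N)%nat ->
  Rabs (f (stair x y j) - f x - sumR j (fun k => Df k x * (y k - x k)))
    <= eps * sumR j (fun k => Rabs (y k - x k))).
{ induction j as [|j IH]; intros Hj; cbn [sumR].
  - rewrite stair_0. replace (f x - f x - 0) with 0 by ring.
    rewrite Rabs_R0, Rmult_0_r. lra.
  - set (z := stair x y j) in *.
    assert (Hzj : z j = x j)
      by (unfold z, stair; destruct (Nat.ltb_spec j j); [lia|auto]).
    assert (Hstep : Rabs (f (shift z j (y j - x j)) - f z - Df j x * (y j - x j))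
                      <= eps * Rabs (y j - x j)).
    { apply line_increment_bound with (D := fun s => Df j (shift z j s)). intros s Hs.
      destruct (Hbox (shift z j s)) as [Dp Hclose].
      - apply InRn_shift; [apply InRn_stair|]; auto; lia.
      - intros l Hl. unfold shift. destruct (Nat.eqb_spec l j) as [->|Hne].
        + rewrite Hzj. replace (x j + s - x j) with s by ring.
          unfold Rmin, Rmax in Hs. destruct (Rle_dec 0 (y j - x j)).
          * rewrite !Rabs_right; lra.
          * rewrite !Rabs_left1; lra.
        + apply stair_between.
      - split; [apply Hp; auto; lia|apply Hclose; lia]. }
    rewrite stair_S. fold z. specialize (IH ltac:(lia)).
    replace (f (shift z j (y j - x j)) - f x
               - (sumR j (fun k => Df k x * (y k - x k)) + Df j x * (y j - x j)))
      with ((f z - f x - sumR j (fun k => Df k x * (y k - x k)))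
            + (f (shift z j (y j - x j)) - f z - Df j x * (y j - x j))) by ring.
    eapply Rle_trans; [apply Rabs_triang|]. lra. }
specialize (Hstair N (le_n N)). now rewrite stair_full in Hstair.
Qed.

Lemma taylor1_bound N (D : pt -> Prop) f (Df : nat -> pt -> R) x :
  InRn N x -> (exists r, r > 0 /\ forall y, InRn N y -> distRn N x y < r -> D y) ->
  (forall y k, D y -> (k < N)%nat -> IsPartialAt f y k (Df k y)) ->
  (forall k, (k < N)%nat -> cont_within N D (Df k) x) ->
  forall eps, eps > 0 -> exists delta, delta > 0 /\
    forall y, InRn N y -> distRn N x y < delta ->
    Rabs (f y - f x - sumR N (fun k => Df k x * (y k - x k)))
      <= eps * sumR N (fun k => Rabs (y k - x k)).
Proof.
intros Hx [r [Hr HD]] Hp Hc eps He.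
destruct (common_delta N (fun _ y => distRn N x y)
            (fun k y => D y -> Rabs (Df k y - Df k x) < eps)) as [d1 [Hd1 Hall]].
{ intros k Hk. destruct (Hc k Hk eps He) as [d2 [Hd2 H2]]. exists d2. auto. }
exists (Rmin r d1). split; [apply Rmin_pos; auto|]. intros y Hy Hxy.
pose proof (Rmin_l r d1). pose proof (Rmin_r r d1).
apply (taylor1_bound_box N D); auto. intros p Hp0 Hdom.
assert (distRn N x p <= distRn N x y) by (apply distRn_le_coordwise; auto).
assert (D p) by (apply HD; auto; lra).
split; auto. intros k Hk. left. apply Hall; auto; lra.
Qed.

Lemma derivable_pt_lim_0_lipschitz g a : derivable_pt_lim g 0 a ->
  exists d, d > 0 /\ forall h, Rabs h < d -> Rabs (g h - g 0) <= (Rabs a + 1) * Rabs h.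
Proof.
intros Hg. destruct (Hg 1 ltac:(lra)) as [[d Hd] Hb]. exists d. split; [exact Hd|].
intros h Hh. destruct (Req_dec h 0) as [->|Hh0].
{ rewrite Rminus_diag, !Rabs_R0. lra. }
specialize (Hb h Hh0 Hh). rewrite Rplus_0_l in Hb.
assert (Habs : 0 < Rabs h) by (apply Rabs_pos_lt; auto).
assert (Hq : Rabs ((g h - g 0) / h) <= Rabs a + 1).
{ replace ((g h - g 0) / h) with (((g h - g 0) / h - a) + a) by ring.
  eapply Rle_trans; [apply Rabs_triang|]. lra. }
unfold Rdiv in Hq. rewrite Rabs_mult, Rabs_inv in Hq.
apply Rmult_le_reg_r with (/ Rabs h); [apply Rinv_0_lt_compat; auto|].
replace ((Rabs a + 1) * Rabs h * / Rabs h) with (Rabs a + 1) by (field; lra). exact Hq.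
Qed.

Lemma curve_increment_le N (gam : R -> pt) (a : nat -> R) :
  (forall k, (k < N)%nat -> derivable_pt_lim (fun t => gam t k) 0 (a k)) ->
  exists d, d > 0 /\ forall h, Rabs h < d ->
    sumR N (fun k => Rabs (gam h k - gam 0 k)) <= sumR N (fun k => Rabs (a k) + 1) * Rabs h.
Proof.
intros Ha.
destruct (common_delta N (fun _ h => Rabs h)
            (fun k h => Rabs (gam h k - gam 0 k) <= (Rabs (a k) + 1) * Rabs h))
  as [d [Hd Hb]].
{ intros k Hk. apply (derivable_pt_lim_0_lipschitz (fun t => gam t k)), Ha, Hk. }
exists d. split; auto. intros h Hh.
rewrite Rmult_comm, <- sumR_scal. apply sumR_le. intros k Hk. rewrite Rmult_comm. auto.
Qed.

Lemma derivable_pt_lim_0_of_little_o F :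
  (forall eps, eps > 0 -> exists d, d > 0 /\
     forall h, Rabs h < d -> Rabs (F h - F 0) <= eps * Rabs h) ->
  derivable_pt_lim F 0 0.
Proof.
intros Ho eps He. destruct (Ho (eps / 2)) as [d [Hd Hb]]; [lra|].
exists (mkposreal d Hd). simpl. intros h Hh0 Hh.
specialize (Hb h Hh). assert (0 < Rabs h) by (apply Rabs_pos_lt; auto).
rewrite Rplus_0_l, Rminus_0_r. unfold Rdiv. rewrite Rabs_mult, Rabs_inv.
apply Rmult_lt_reg_r with (Rabs h); [lra|].
rewrite Rmult_assoc, Rinv_l, Rmult_1_r by lra. nra.
Qed.

Lemma linearization_remainder_derivable_0 N f (Df : nat -> pt -> R) (gam : R -> pt)
    (a : nat -> R) :
  (forall y k, InRn N y -> (k < N)%nat -> IsPartialAt f y k (Df k y)) ->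
  (forall k, (k < N)%nat -> cont_within N (InRn N) (Df k) (gam 0)) ->
  (exists r, r > 0 /\ forall t, Rabs t < r -> InRn N (gam t)) ->
  (forall k, (k < N)%nat -> derivable_pt_lim (fun t => gam t k) 0 (a k)) ->
  derivable_pt_lim
    (fun t => f (gam t) - sumR N (fun k => Df k (gam 0) * (gam t k - gam 0 k))) 0 0.
Proof.
intros Hp Hc [r [Hr Hin]] Ha. apply derivable_pt_lim_0_of_little_o. intros eps He.
assert (Hx0 : InRn N (gam 0)) by (apply Hin; rewrite Rabs_R0; lra).
set (A := sumR N (fun k => Rabs (a k) + 1)).
assert (HA : 0 <= A) by (apply sumR_nonneg; intros; pose proof (Rabs_pos (a k)); lra).
set (e := eps / (A + 1)).
assert (He' : e > 0) by (apply Rdiv_lt_0_compat; lra).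
assert (HeA : e * A <= eps).
{ unfold e. apply Rmult_le_reg_r with (A + 1); [lra|].
  replace (eps / (A + 1) * A * (A + 1)) with (eps * A) by (field; lra). nra. }
destruct (taylor1_bound N (InRn N) f Df (gam 0) Hx0) with (eps := e)
  as [d1 [Hd1 Htaylor]]; auto.
{ exists 1. split; auto; lra. }
destruct (curve_increment_le N gam a Ha) as [d2 [Hd2 Hcurve]].
exists (Rmin r (Rmin d2 (d1 / (A + 1)))).
split; [repeat apply Rmin_pos; auto; apply Rdiv_lt_0_compat; lra|]. intros h Hh.
pose proof (Rmin_l r (Rmin d2 (d1 / (A + 1)))).
pose proof (Rmin_r r (Rmin d2 (d1 / (A + 1)))).
pose proof (Rmin_l d2 (d1 / (A + 1))). pose proof (Rmin_r d2 (d1 / (A + 1))).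
pose proof (Rabs_pos h).
specialize (Hcurve h ltac:(lra)). fold A in Hcurve.
assert (Hdist : distRn N (gam 0) (gam h) < d1).
{ eapply Rle_lt_trans; [apply distRn_le_sum_abs|].
  rewrite (sumR_ext _ _ (fun k => Rabs (gam h k - gam 0 k)))
    by (intros; apply Rabs_minus_sym).
  assert (Rabs h < d1 / (A + 1)) by lra.
  assert ((A + 1) * (d1 / (A + 1)) = d1) by (field; lra).
  nra. }
specialize (Htaylor (gam h) (Hin h ltac:(lra)) Hdist).
rewrite (sumR_ext N (fun k => Df k (gam 0) * (gam 0 k - gam 0 k)) (fun _ => 0)), sumR_0
  by (intros; ring).
replace (f (gam h) - sumR N (fun k => Df k (gam 0) * (gam h k - gam 0 k)) - (f (gam 0) - 0))
  with (f (gam h) - f (gam 0) - sumR N (fun k => Df k (gam 0) * (gam h k - gam 0 k)))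
  by ring.
eapply Rle_trans; [exact Htaylor|].
apply Rle_trans with (e * (A * Rabs h)); [apply Rmult_le_compat_l; lra|]. nra.
Qed.

Lemma chain_rule_curve N f (Df : nat -> pt -> R) (gam : R -> pt) x0 (a : nat -> R) :
  (forall y k, InRn N y -> (k < N)%nat -> IsPartialAt f y k (Df k y)) ->
  (forall k, (k < N)%nat -> cont_within N (InRn N) (Df k) x0) -> gam 0 = x0 ->
  (exists r, r > 0 /\ forall t, Rabs t < r -> InRn N (gam t)) ->
  (forall k, (k < N)%nat -> derivable_pt_lim (fun t => gam t k) 0 (a k)) ->
  derivable_pt_lim (fun t => f (gam t)) 0 (sumR N (fun k => Df k x0 * a k)).
Proof.
intros Hp Hc <- Hin Ha.
set (L := fun t => sumR N (fun k => Df k (gam 0) * (gam t k - gam 0 k))).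
assert (HL : derivable_pt_lim L 0 (sumR N (fun k => Df k (gam 0) * a k))).
{ apply derivable_pt_lim_sumR. intros k Hk. apply derivable_pt_lim_scal.
  replace (a k) with (a k - 0) by ring.
  apply derivable_pt_lim_minus; [apply Ha, Hk|apply derivable_pt_lim_const]. }
apply derivable_pt_lim_ext with (f := fun t => L t + (f (gam t) - L t));
  [intros; ring|].
replace (sumR N (fun k => Df k (gam 0) * a k))
  with (sumR N (fun k => Df k (gam 0) * a k) + 0) by ring.
apply derivable_pt_lim_plus; [exact HL|].
now apply linearization_remainder_derivable_0 with (a := a).
Qed.

Definition C2_partials N (D : pt -> Prop) (f : pt -> R) (Df : nat -> pt -> R)
    (D2f : nat -> nat -> pt -> R) : Prop :=
  (forall i x, (i < N)%nat -> D x -> IsPartialAt f x i (Df i x)) /\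
  (forall i, (i < N)%nat -> cont_on N D (Df i)) /\
  (forall i j x, (i < N)%nat -> (j < N)%nat -> D x -> IsPartialAt (Df i) x j (D2f i j x)) /\
  (forall i j, (i < N)%nat -> (j < N)%nat -> cont_on N D (D2f i j)).

Lemma Ck2_partials N D f : Ck N D 2 f -> exists Df D2f, C2_partials N D f Df D2f.
Proof.
intros [_ H].
destruct (finite_choice N (fun _ : pt => 0, fun (_ : nat) (_ : pt) => 0)
  (fun i p => (forall x, D x -> IsPartialAt f x i (fst p x)) /\ cont_on N D (fst p) /\
     forall j, (j < N)%nat ->
       (forall x, D x -> IsPartialAt (fst p) x j (snd p j x)) /\ cont_on N D (snd p j)))
  as [F HF].
{ intros i Hi. destruct (H i Hi) as [g1 [Hg1 [Hc1 H1]]].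
  destruct (finite_choice N (fun _ : pt => 0)
     (fun j g2 => (forall x, D x -> IsPartialAt g1 x j (g2 x)) /\ cont_on N D g2))
    as [F2 HF2].
  { intros j Hj. destruct (H1 j Hj) as [g2 [Hg2 Hc2]]. exists g2. auto. }
  exists (g1, F2). simpl. auto. }
exists (fun i => fst (F i)), (fun i => snd (F i)).
split; [|split; [|split]].
- intros i x Hi Dx. apply (HF i Hi); auto.
- intros i Hi. apply (HF i Hi).
- intros i j x Hi Hj Dx. apply (proj2 (proj2 (HF i Hi)) j Hj); auto.
- intros i j Hi Hj. apply (proj2 (proj2 (HF i Hi)) j Hj).
Qed.

Lemma Ck2_partials_family N M D (F : nat -> pt -> R) :
  (forall k, (k < M)%nat -> Ck N D 2 (F k)) ->
  exists (DF : nat -> nat -> pt -> R) (D2F : nat -> nat -> nat -> pt -> R),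
    forall k, (k < M)%nat -> C2_partials N D (F k) (DF k) (D2F k).
Proof.
intros HF.
destruct (finite_choice M (fun (_ : nat) (_ : pt) => 0, fun (_ _ : nat) (_ : pt) => 0)
            (fun k P => C2_partials N D (F k) (fst P) (snd P))) as [PP HPP].
{ intros k Hk. destruct (Ck2_partials N D (F k) (HF k Hk)) as [Df [D2f H]].
  now exists (Df, D2f). }
now exists (fun k => fst (PP k)), (fun k => snd (PP k)).
Qed.

Lemma comp_C2_partials n d U f (phi : pt -> pt) :
  open_in d U -> (forall u, U u -> InRn n (phi u)) ->
  Ck n (InRn n) 2 f -> (forall k, (k < n)%nat -> Ck d U 2 (fun u => phi u k)) ->
  exists (G : nat -> pt -> R) (DG : nat -> nat -> pt -> R),
    (forall i u, (i < d)%nat -> U u -> IsPartialAt (fun u => f (phi u)) u i (G i u)) /\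
    (forall i j u, (i < d)%nat -> (j < d)%nat -> U u -> IsPartialAt (G i) u j (DG i j u)) /\
    (forall i j u, (i < d)%nat -> (j < d)%nat -> U u -> cont_within d U (DG i j) u).
Proof.
intros HU Hin Hf Hphi.
destruct (Ck2_partials n (InRn n) f Hf) as (Df & D2f & Hf1 & Hf1c & Hf2 & Hf2c).
destruct (Ck2_partials_family d n U (fun k u => phi u k) Hphi) as [Dphi [D2phi Hp]].
assert (Hcurve : forall u i, U u -> (i < d)%nat ->
          exists r, r > 0 /\ forall t, Rabs t < r -> InRn n (phi (shift u i t))).
{ intros u i Uu Hi. destruct (open_in_shift d U u i HU Uu Hi) as [r [Hr Hl]].
  exists r. auto. }
exists (fun i u => sumR n (fun k => Df k (phi u) * Dphi k i u)).
exists (fun i j u => sumR n (fun k =>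
          sumR n (fun l => D2f k l (phi u) * Dphi l j u) * Dphi k i u
          + Df k (phi u) * D2phi k i j u)).
split; [|split].
- intros i u Hi Uu.
  apply chain_rule_curve with (gam := fun t => phi (shift u i t)).
  + intros y k Hy Hk. apply Hf1; auto.
  + intros k Hk. exact (Hf1c k Hk _ (Hin u Uu)).
  + now rewrite shift_0.
  + apply Hcurve; auto.
  + intros k Hk. apply (Hp k Hk); auto.
- intros i j u Hi Hj Uu. apply derivable_pt_lim_sumR. intros k Hk.
  replace (Df k (phi u)) with (Df k (phi (shift u j 0))) by now rewrite shift_0.
  replace (Dphi k i u) with (Dphi k i (shift u j 0)) by now rewrite shift_0.
  apply derivable_pt_lim_mult.
  + apply chain_rule_curve with (gam := fun t => phi (shift u j t)).
    * intros y l Hy Hl. apply Hf2; auto.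
    * intros l Hl. exact (Hf2c k l Hk Hl _ (Hin u Uu)).
    * now rewrite shift_0.
    * apply Hcurve; auto.
    * intros l Hl. apply (Hp l Hl); auto.
  + apply (Hp k Hk); auto.
- intros i j u Hi Hj Uu.
  assert (Hcomp : forall F, cont_on n (InRn n) F -> cont_within d U (fun w => F (phi w)) u).
  { intros F HF. apply (cont_within_comp d n U phi); [exact Hin| |exact (HF _ (Hin u Uu))].
    intros k Hk. exact (proj1 (Hphi k Hk) u Uu). }
  apply cont_within_sumR. intros k Hk.
  destruct (Hp k Hk) as (_ & Hp1c & _ & Hp2c).
  apply cont_within_plus; apply cont_within_mult.
  + apply cont_within_sumR. intros l Hl.
    apply cont_within_mult; [apply Hcomp, Hf2c; auto|].
    exact (proj1 (proj2 (Hp l Hl)) j Hj u Uu).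
  + exact (Hp1c i Hi u Uu).
  + apply Hcomp, Hf1c; auto.
  + exact (Hp2c i j Hi Hj u Uu).
Qed.

Module NonsingularInverse.
Import all_boot all_algebra Rstruct.
Import GRing.Theory.
Local Open Scope ring_scope.

Lemma sumR_big (d : nat) (f : nat -> R) : sumR d f = \sum_(i < d) f i.
Proof.
elim: d => [|d IH]; first by rewrite big_ord0.
by rewrite big_ord_recr /= IH.
Qed.

(* Injectivity of [w |-> H w] means the transposed matrix has a trivial left
   kernel, i.e. full rank. *)
Lemma nonsingular_mx_unit (d : nat) (H : nat -> nat -> R) : nonsingular_mx d.+1 H ->
  (\matrix_(i, j) H i j : 'M[R]_d.+1) \in unitmx.
Proof.
set M : 'M[R]_d.+1 := \matrix_(i, j) H i j => Hns.
have kerT : forall r : 'rV[R]_d.+1, r *m M^T = 0 -> r = 0.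
  move=> r Hr.
  pose w := fun j : nat => if (j < d.+1)%N then r 0 (inord j) else 0.
  have Hw : InRn d.+1 w.
    move=> i Hi; rewrite /w.
    have : (i < d.+1)%N = false by apply/negbTE; rewrite -leqNgt; apply/leP.
    by move=> ->.
  have Hz : forall i, (i < d.+1)%coq_nat -> w i = 0.
    apply: Hns => // i Hi.
    have := congr1 (fun A : 'rV[R]_d.+1 => A 0 (inord i)) Hr.
    rewrite !mxE sumR_big => Heq; apply: (etrans _ Heq).
    apply: eq_bigr => l _.
    rewrite mxE mxE.
    have Hi' : (i < d.+1)%N by apply/ltP.
    rewrite (inordK Hi') /w ltn_ord inord_val.
    exact: mulrC.
  apply/rowP => j; rewrite mxE.
  have -> : r 0 j = w j by rewrite /w ltn_ord inord_val.
  by apply: Hz; apply/ltP.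
rewrite -unitmx_tr -row_free_unit /row_free.
have K0 : kermx M^T = 0.
  apply/row_matrixP => i; rewrite row0.
  apply: kerT.
  apply/sub_kermxP.
  exact: submx_trans (row_sub i _) (submx_refl _).
have := mxrank_ker M^T.
rewrite K0 mxrank0 => /eqP.
rewrite eq_sym subn_eq0 => Hle.
by rewrite eqn_leq rank_leq_row Hle.
Qed.

Lemma nonsingular_mx_left_inverse (d : nat) (H : nat -> nat -> R) : nonsingular_mx d H ->
  exists K : nat -> nat -> R, forall w, InRn d w -> forall j, lt j d ->
    w j = sumR d (fun i => K j i * sumR d (fun l => H i l * w l)).
Proof.
case: d H => [|d] H Hns.
  by exists (fun _ _ => 0) => w _ j Hj; inversion Hj.
set M : 'M[R]_d.+1 := \matrix_(i, j) H i j.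
exists (fun j i => (invmx M) (inord j) (inord i)) => w Hw j Hj.
have Hj' : (j < d.+1)%N by apply/ltP.
pose v : 'cV[R]_d.+1 := \col_(l < d.+1) w l.
have := mulKmx (nonsingular_mx_unit d H Hns) v.
move/(congr1 (fun A : 'cV[R]_d.+1 => A (inord j) 0)).
rewrite [v _ _]mxE (inordK Hj') => <-.
rewrite sumR_big mxE.
apply: eq_bigr => i _.
rewrite inord_val.
congr (_ * _).
rewrite mxE sumR_big.
apply: eq_bigr => l _.
by rewrite mxE [v _ _]mxE.
Qed.

End NonsingularInverse.

Lemma nonsingular_mx_lower_bound d (H : nat -> nat -> R) : nonsingular_mx d H ->
  exists C, C > 0 /\ forall w, InRn d w ->
    sumR d (fun j => Rabs (w j)) <= C * sumR d (fun i => Rabs (sumR d (fun l => H i l * w l))).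
Proof.
intros Hns. destruct (NonsingularInverse.nonsingular_mx_left_inverse d H Hns) as [K HK].
set (B := sumR d (fun j => sumR d (fun i => Rabs (K j i)))).
assert (HB : forall j i, (j < d)%nat -> (i < d)%nat -> Rabs (K j i) <= B).
{ intros j i Hj Hi. apply Rle_trans with (sumR d (fun i => Rabs (K j i))).
  - apply (sumR_term_le d (fun i => Rabs (K j i))); auto. intros; apply Rabs_pos.
  - apply (sumR_term_le d (fun j => sumR d (fun i => Rabs (K j i)))); auto.
    intros; apply sumR_nonneg; intros; apply Rabs_pos. }
assert (HB0 : 0 <= B) by (apply sumR_nonneg; intros; apply sumR_nonneg; intros; apply Rabs_pos).
assert (Hd : 0 <= INR d) by apply pos_INR.
exists (INR d * B + 1). split; [nra|]. intros w Hw.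
set (V := sumR d (fun i => Rabs (sumR d (fun l => H i l * w l)))).
assert (HV : 0 <= V) by (apply sumR_nonneg; intros; apply Rabs_pos).
assert (Hj : forall j, (j < d)%nat -> Rabs (w j) <= B * V).
{ intros j Hj. rewrite (HK w Hw j Hj). eapply Rle_trans; [apply sumR_abs|].
  unfold V. rewrite <- sumR_scal. apply sumR_le. intros i Hi. rewrite Rabs_mult.
  apply Rmult_le_compat_r; [apply Rabs_pos|auto]. }
eapply Rle_trans; [apply sumR_le_const; exact Hj|]. nra.
Qed.

(* Inverse-function-type local injectivity: near [u0] the linear part
   [DG(u0) (u - u0)] dominates the first-order remainder. *)
Lemma locally_injective_of_nonsingular_jacobian d U (G : nat -> pt -> R)
    (DG : nat -> nat -> pt -> R) u0 :
  open_in d U -> U u0 ->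
  (forall i j u, (i < d)%nat -> (j < d)%nat -> U u -> IsPartialAt (G i) u j (DG i j u)) ->
  (forall i j, (i < d)%nat -> (j < d)%nat -> cont_within d U (DG i j) u0) ->
  nonsingular_mx d (fun i j => DG i j u0) ->
  exists delta, delta > 0 /\ forall u, U u -> distRn d u0 u < delta ->
    (forall i, (i < d)%nat -> G i u = G i u0) -> u = u0.
Proof.
intros HU Uu0 HDG HcDG Hns.
destruct (nonsingular_mx_lower_bound d _ Hns) as [C [HC HCb]].
destruct (HU u0 Uu0) as [Hu0d Hball].
assert (Hd0 : 0 <= INR d) by apply pos_INR.
set (eps := 1 / (2 * C * (INR d + 1))).
assert (He : eps > 0)
  by (apply Rdiv_lt_0_compat; [lra|]; apply Rmult_lt_0_compat; lra).
destruct (common_delta d (fun _ y => distRn d u0 y) (fun i y => InRn d y ->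
    Rabs (G i y - G i u0 - sumR d (fun j => DG i j u0 * (y j - u0 j)))
      <= eps * sumR d (fun j => Rabs (y j - u0 j)))) as [delta [Hdelta Htaylor]].
{ intros i Hi.
  destruct (taylor1_bound d U (G i) (fun j => DG i j) u0 Hu0d Hball)
    with (eps := eps) as [dd [Hdd Hb]]; auto.
  exists dd. auto. }
exists delta. split; auto. intros u Uu Hu Hz.
assert (Hud : InRn d u) by apply (HU u Uu).
set (w := fun j => u j - u0 j).
assert (Hw : InRn d w) by (intros l Hl; unfold w; rewrite Hud, Hu0d by lia; ring).
set (S := sumR d (fun j => Rabs (w j))).
assert (HS0 : 0 <= S) by (apply sumR_nonneg; intros; apply Rabs_pos).
assert (Hlin : forall i, (i < d)%nat -> Rabs (sumR d (fun l => DG i l u0 * w l)) <= eps * S).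
{ intros i Hi. specialize (Htaylor i Hi u Hu Hud). rewrite (Hz i Hi) in Htaylor.
  rewrite <- Rabs_Ropp. unfold w, S.
  replace (- sumR d (fun l => DG i l u0 * (u l - u0 l)))
    with (G i u0 - G i u0 - sumR d (fun j => DG i j u0 * (u j - u0 j))) by ring.
  exact Htaylor. }
assert (S <= C * (INR d * (eps * S))).
{ eapply Rle_trans; [exact (HCb w Hw)|]. apply Rmult_le_compat_l; [lra|].
  apply sumR_le_const; auto. }
assert (Hhalf : C * (INR d * (eps * S)) <= S / 2).
{ replace (C * (INR d * (eps * S))) with (INR d / (INR d + 1) * (S / 2))
    by (unfold eps; field; lra).
  assert (INR d / (INR d + 1) <= 1).
  { apply Rmult_le_reg_r with (INR d + 1); [lra|].
    unfold Rdiv. rewrite Rmult_assoc, Rinv_l by lra. lra. }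
  assert (0 <= INR d / (INR d + 1))
    by (apply Rmult_le_pos; [lra|left; apply Rinv_0_lt_compat; lra]).
  nra. }
apply (eq_of_sumR_abs_le0 d); auto. change (S <= 0). lra.
Qed.

Lemma extremal_level_isolated n d (Y : pt -> Prop) (f : pt -> R) c0 :
  smooth_on n (InRn n) f -> (forall p, Y p -> InRn n p) -> Morse_on n d Y f ->
  ((forall q, Y q -> f q <= c0) \/ (forall q, Y q -> c0 <= f q)) ->
  forall p, Y p -> f p = c0 ->
  exists r, r > 0 /\ forall q, Y q -> f q = c0 -> distRn n p q < r -> q = p.
Proof.
intros Hsm HY HM Hext p Yp Hp.
destruct (HM p Yp) as [[U [phi [u0 [Hch [Uu0 Hpu0]]]]] Hnondeg].
pose proof Hch as (HU & Hphi & HUY & _ & [_ Himg] & Hinv & _).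
destruct (comp_C2_partials n d U f phi HU (fun u Uu => HY _ (HUY u Uu)) (Hsm 2%nat)
            (fun k Hk => Hphi k Hk 2%nat)) as (G & DG & HG & HDG & HcDG).
assert (Hcrit : forall u, U u -> f (phi u) = c0 -> forall i, (i < d)%nat -> G i u = 0).
{ intros u Uu Hu i Hi. apply (partial_eq0_at_extremum d U (fun u => f (phi u)) u i); auto.
  rewrite Hu. destruct Hext as [Hmax|Hmin]; [left|right]; intros v Uv; auto. }
assert (Hns : nonsingular_mx d (fun i j => DG i j u0)).
{ apply (Hnondeg U phi u0 Hch Uu0 Hpu0).
  - intros i Hi. rewrite <- (Hcrit u0 Uu0 ltac:(congruence) i Hi). auto.
  - exists G. auto. }
destruct (locally_injective_of_nonsingular_jacobian d U G DG u0 HU Uu0 HDG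
            (fun i j Hi Hj => HcDG i j u0 Hi Hj Uu0) Hns) as [dl [Hdl Hloc]].
destruct (Himg p (ex_intro _ u0 (conj Uu0 Hpu0))) as [r1 [Hr1 Hr1b]].
destruct (Hinv u0 Uu0 dl Hdl) as [d2 [Hd2 Hd2b]].
exists (Rmin r1 d2). split; [apply Rmin_pos; auto|].
intros q Yq Hq Hpq. pose proof (Rmin_l r1 d2). pose proof (Rmin_r r1 d2).
destruct (Hr1b q Yq ltac:(lra)) as [u [Uu <-]].
rewrite <- Hpu0. f_equal. apply Hloc; auto.
- apply Hd2b; auto. rewrite Hpu0. lra.
- intros i Hi. rewrite (Hcrit u Uu Hq i Hi), (Hcrit u0 Uu0 ltac:(congruence) i Hi). reflexivity.
Qed.

Lemma social_choice_solvable_of_isolated n (X : pt -> Prop) :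
  (forall p, X p -> exists r, r > 0 /\ forall q, X q -> distRn n p q < r -> q = p) ->
  social_choice_solvable n X.
Proof.
intros Hiso k Hk.
set (unanimous := fun xs : nat -> pt =>
                    forall i j, (i < k)%nat -> (j < k)%nat -> xs i = xs j).
set (p0 := epsilon (inhabits (fun _ : nat => 0)) X).
set (F := fun xs => if excluded_middle_informative (unanimous xs) then xs 0%nat else p0).
assert (HF : forall xs ys, (forall i, (i < k)%nat -> xs i = ys i) -> F xs = F ys).
{ intros xs ys H. unfold F.
  destruct (excluded_middle_informative (unanimous xs)) as [A|A];
  destruct (excluded_middle_informative (unanimous ys)) as [B|B].
  - apply H; lia.
  - exfalso. apply B. intros i j Hi Hj. rewrite <- !H by auto. apply A; auto.
  - exfalso. apply A. intros i j Hi Hj. rewrite !H by auto. apply B; auto.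
  - reflexivity. }
exists F. split; [|split; [|split; [|split]]].
- exact HF.
- intros xs Hxs. unfold F. destruct (excluded_middle_informative (unanimous xs)).
  + apply Hxs; lia.
  + apply epsilon_spec. exists (xs 0%nat). apply Hxs. lia.
- intros xs Hxs eps He.
  destruct (common_delta k (fun i q => distRn n (xs i) q) (fun i q => X q -> q = xs i))
    as [dl [Hdl Hb]].
  { intros i Hi. destruct (Hiso (xs i) (Hxs i Hi)) as [r [Hr Hrb]]. exists r. auto. }
  exists dl. split; auto. intros ys Hys Hd.
  rewrite (HF ys xs), distRn_refl; [lra|]. intros i Hi. apply Hb; auto.
- intros xs sigma Hxs [Hs1 Hs2]. unfold F.
  assert (Hsur : bSurjective k sigma) by exact (proj1 (bInjective_bSurjective Hs1) Hs2).
  destruct (excluded_middle_informative (unanimous (fun i => xs (sigma i)))) as [A|A];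
  destruct (excluded_middle_informative (unanimous xs)) as [B|B].
  + apply B; [apply Hs1|]; lia.
  + exfalso. apply B. intros i j Hi Hj.
    destruct (Hsur i Hi) as [a [Ha Hai]]. destruct (Hsur j Hj) as [b [Hb Hbj]].
    subst. apply A; auto.
  + exfalso. apply A. intros i j Hi Hj. apply B; auto.
  + reflexivity.
- intros p Xp. unfold F.
  destruct (excluded_middle_informative (unanimous (fun _ => p))) as [A|A]; [reflexivity|].
  exfalso. apply A. intros i j _ _. reflexivity.
Qed.

Theorem proposition11 (n m : nat) (g : nat -> pt -> R) (c : nat -> R) :
  (2 <= m)%nat -> (m < n)%nat ->
  (forall i, (i < m)%nat -> smooth_on n (InRn n) (g i)) ->
  (exists p, Yset n m g c p) ->
  bounded_set n (Yset n m g c) ->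
  connected_set n (Yset n m g c) ->
  (forall p, Yset n m g c p -> grads_indep n m g p) ->
  Morse_on n (n - (m - 1)) (Yset n m g c) (g (m - 1)%nat) ->
  (is_global_max (Yset n m g c) (g (m - 1)%nat) (c (m - 1)%nat) \/
   is_global_min (Yset n m g c) (g (m - 1)%nat) (c (m - 1)%nat)) ->
  social_choice_solvable n (Xset n m g c).
Proof.
intros Hm _ Hsm _ _ _ _ HMorse Hext.
apply social_choice_solvable_of_isolated. intros p [Yp Hp].
destruct (extremal_level_isolated n (n - (m - 1)) (Yset n m g c) (g (m - 1)%nat)
            (c (m - 1)%nat) (Hsm (m - 1)%nat ltac:(lia)) (fun q Yq => proj1 Yq) HMorse)
  with (p := p) as [r [Hr Hiso]]; auto.
{ destruct Hext as [[_ H]|[_ H]]; auto. }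
exists r. split; auto. intros q [Yq Hq]. auto.
Qed.
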